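(* For any group $B$ and any positive integer $k$, the composition $$H_2(B_k;\mathbb Z)\xrightarrow{i_*}H_2(B;\mathbb Z)\xrightarrow{\pi_*}H_2(B/B_{2k-1};\mathbb Z)$$ is the zero map, where $i$ is the inclusion and $\pi$ the quotient map.
   Context: $B_k$ denotes the $k$-th term of the lower central series: $B_1=B$, $B_{k+1}=[B,B_k]$. *)

(* Arbitrary (possibly infinite) groups, integral group homology
   in degree 2 via the (inhomogeneous) bar complex, with formal Z-linear
   combinations represented as lists of (coefficient, basis element). *)
From Stdlib Require Import ZArith List ClassicalDescription.
Import ListNotations.
Open Scope Z_scope.

Record isGroup {G : Type} (mul : G -> G -> G) (one : G) (inv : G -> G) : Prop := {
  grp_assoc : forall x y z, mul x (mul y z) = mul (mul x y) z;
  grp_mul1g : forall x, mul one x = x;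
  grp_mulg1 : forall x, mul x one = x;
  grp_mulVg : forall x, mul (inv x) x = one;
  grp_mulgV : forall x, mul x (inv x) = one }.

Section GroupDefs.
Variables (G : Type) (mul : G -> G -> G) (one : G) (inv : G -> G).

Definition comm (a b : G) : G := mul (mul (inv a) (inv b)) (mul a b).

Inductive gen (S : G -> Prop) : G -> Prop :=
  | gen_in : forall x, S x -> gen S x
  | gen_one : gen S one
  | gen_mul : forall x y, gen S x -> gen S y -> gen S (mul x y)
  | gen_inv : forall x, gen S x -> gen S (inv x).

(* lower central series: lcs k = B_k for k >= 1 (B_1 = B, B_{k+1} = [B, B_k]);
   lcs 0 is also set to B by convention (never used). *)
Fixpoint lcs (k : nat) : G -> Prop :=
  match k with
  | O => fun _ => True
  | S O => fun _ => True
  | S ((S _) as n) =>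
      gen (fun g => exists b x, lcs n x /\ g = comm b x)
  end.

(* Coset equivalence modulo a subgroup N : x ~ y iff x^-1 y in N
   (the equality of the quotient group B/N when N is normal). *)
Definition cong_mod (N : G -> Prop) (x y : G) : Prop := N (mul (inv x) y).

(* Bar complex boundaries (inhomogeneous, trivial Z-coefficients). *)
Definition d2 (c : list (Z * (G * G))) : list (Z * G) :=
  flat_map (fun t => let '(n, (g, h)) := t in
     [(n, h); (- n, mul g h); (n, g)]) c.

Definition d3 (c : list (Z * (G * G * G))) : list (Z * (G * G)) :=
  flat_map (fun t => let '(n, (g, h, l)) := t in
     [(n, (h, l)); (- n, (mul g h, l)); (n, (g, mul h l)); (- n, (g, h))]) c.

End GroupDefs.
Arguments d2 {G} mul c.
Arguments d3 {G} mul c.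
Arguments lcs {G} mul one inv k.
Arguments cong_mod {G} mul inv N x y.

Definition coef {X : Type} (eqv : X -> X -> Prop) (c : list (Z * X)) (x : X) : Z :=
  fold_right (fun t acc =>
    (if excluded_middle_informative (eqv (snd t) x) then fst t else 0) + acc) 0 c.

(* Equality of formal sums in the free abelian group on X / eqv. *)
Definition chain_eq {X : Type} (eqv : X -> X -> Prop) (c1 c2 : list (Z * X)) : Prop :=
  forall x, coef eqv c1 x = coef eqv c2 x.

Definition pair_rel {X : Type} (eqv : X -> X -> Prop) (p q : X * X) : Prop :=
  eqv (fst p) (fst q) /\ eqv (snd p) (snd q).

Definition is_2cycle {G : Type} (mul : G -> G -> G) (eqv : G -> G -> Prop)
    (S : G -> Prop) (z : list (Z * (G * G))) : Prop :=
  Forall (fun t => S (fst (snd t)) /\ S (snd (snd t))) z /\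
  chain_eq eqv (d2 mul z) [].

Definition is_2boundary {G : Type} (mul : G -> G -> G) (eqv : G -> G -> Prop)
    (z : list (Z * (G * G))) : Prop :=
  exists w : list (Z * (G * G * G)), chain_eq (pair_rel eqv) (d3 mul w) z.

From Stdlib Require Import ZArith List Lia Permutation ClassicalDescription.
Import ListNotations.
Open Scope Z_scope.

(* Write u ∧ v for the 2-chain (u, v) - (v, u) of the bar complex of Q = B/B_(2k-1).
   A 2-cycle z of B_k yields two words in the letters of B_k: the relation d2 z = 0 says
   exactly that they are permutations of each other. To a word x_1 ... x_m attach the chain
   Σ (x_i, x_(i+1) ⋯ x_m); merging adjacent letters a, b into ab changes it by (a, b) plus a
   boundary, which recovers z from the two words, while swapping adjacent letters x, y of
   B_k, which commute in Q since [B_k, B_k] ⊆ B_2k, changes it by x ∧ y plus a boundary.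
   So it suffices that x ∧ y bounds in Q for x, y in B_k. More generally x ∧ y bounds in
   B/B_n whenever x ∈ B_i, y ∈ B_j and i + j > n, by induction on i, using that ∧ is
   bilinear and conjugation invariant on pairs that commute modulo B_n. *)

Section Group.
Variables (B : Type) (mul : B -> B -> B) (one : B) (inv : B -> B).
Hypothesis hB : isGroup mul one inv.

Lemma mulgA x y z : mul x (mul y z) = mul (mul x y) z.
Proof. exact (grp_assoc _ _ _ hB x y z). Qed.
Lemma mul1g x : mul one x = x. Proof. exact (grp_mul1g _ _ _ hB x). Qed.
Lemma mulg1 x : mul x one = x. Proof. exact (grp_mulg1 _ _ _ hB x). Qed.
Lemma mulVg x : mul (inv x) x = one. Proof. exact (grp_mulVg _ _ _ hB x). Qed.
Lemma mulgV x : mul x (inv x) = one. Proof. exact (grp_mulgV _ _ _ hB x). Qed.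

Lemma mulKg x y : mul (inv x) (mul x y) = y.
Proof. rewrite mulgA, mulVg, mul1g; reflexivity. Qed.
Lemma mulKVg x y : mul x (mul (inv x) y) = y.
Proof. rewrite mulgA, mulgV, mul1g; reflexivity. Qed.

Lemma invg_of_mul_eq1 x y : mul x y = one -> inv x = y.
Proof. intro H. rewrite <- (mulg1 (inv x)), <- H, mulKg. reflexivity. Qed.
Lemma invMg x y : inv (mul x y) = mul (inv y) (inv x).
Proof. apply invg_of_mul_eq1. rewrite <- mulgA, mulKVg, mulgV. reflexivity. Qed.
Lemma invgK x : inv (inv x) = x.
Proof. apply invg_of_mul_eq1, mulVg. Qed.
Lemma invg1 : inv one = one.
Proof. apply invg_of_mul_eq1, mul1g. Qed.

Ltac group_simpl := repeat progress (rewrite <- ?mulgA, ?mul1g, ?mulg1, ?mulVg,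
  ?mulgV, ?mulKg, ?mulKVg, ?invMg, ?invgK, ?invg1).

Definition conjg (g a : B) : B := mul (mul (inv g) a) g.
Local Notation commg := (comm B mul inv).
Local Notation L := (lcs mul one inv).

Lemma invg_comm a b : inv (commg a b) = commg b a.
Proof. unfold comm; group_simpl; reflexivity. Qed.

Lemma hall_witt x y z :
  mul (conjg y (commg (commg x (inv y)) z))
    (mul (conjg z (commg (commg y (inv z)) x)) (conjg x (commg (commg z (inv x)) y)))
  = one.
Proof. unfold conjg, comm; group_simpl; reflexivity. Qed.

Lemma lcs_SS n :
  L (S (S n)) = gen B mul one inv (fun g => exists b x, L (S n) x /\ g = commg b x).
Proof. reflexivity. Qed.

Lemma lcs1g n : L n one.
Proof. destruct n as [|[|n]]; simpl; auto. apply gen_one. Qed.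
Lemma lcsM n x y : L n x -> L n y -> L n (mul x y).
Proof. destruct n as [|[|n]]; simpl; auto. apply gen_mul. Qed.
Lemma lcsV n x : L n x -> L n (inv x).
Proof. destruct n as [|[|n]]; simpl; auto. apply gen_inv. Qed.

Lemma lcsJ n : forall g x, L n x -> L n (conjg g x).
Proof.
  induction n as [|[|n] IH]; intros g x Hx; [exact I | exact I |].
  rewrite lcs_SS in *. induction Hx as [x Hx| |x y _ IHx _ IHy|x _ IHx].
  - destruct Hx as (b & y & Hy & ->). apply gen_in. exists (conjg g b), (conjg g y).
    split; [apply IH; exact Hy | unfold conjg, comm; group_simpl; reflexivity].
  - replace (conjg g one) with one by (unfold conjg; group_simpl; reflexivity).
    apply gen_one.
  - replace (conjg g (mul x y)) with (mul (conjg g x) (conjg g y))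
      by (unfold conjg; group_simpl; reflexivity).
    apply gen_mul; assumption.
  - replace (conjg g (inv x)) with (inv (conjg g x))
      by (unfold conjg; group_simpl; reflexivity).
    apply gen_inv; assumption.
Qed.

Lemma lcs_commg_succ n b x : L n x -> L (S n) (commg b x).
Proof. destruct n as [|n]; simpl; [auto | intro Hx; apply gen_in; eauto]. Qed.

Lemma lcs_succ_sub n x : L (S n) x -> L n x.
Proof.
  destruct n as [|n]; [simpl; auto |].
  rewrite lcs_SS. intro Hx. induction Hx as [x Hx| |x y _ IHx _ IHy|x _ IHx].
  - destruct Hx as (b & y & Hy & ->).
    replace (commg b y) with (mul (conjg b (inv y)) y)
      by (unfold conjg, comm; group_simpl; reflexivity).
    apply lcsM; [apply lcsJ, lcsV |]; exact Hy.
  - apply lcs1g.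
  - apply lcsM; assumption.
  - apply lcsV; assumption.
Qed.

Lemma lcs_antimono i j x : (i <= j)%nat -> L j x -> L i x.
Proof. induction 1; auto using lcs_succ_sub. Qed.

(* The generator case is the three-subgroup lemma: by Hall–Witt, [[b,u],y] is a
   product of conjugates of the other two cyclic rotations. *)
Lemma lcs_commg i : forall j x y,
  L (S i) x -> L (S j) y -> L (S i + S j) (commg x y).
Proof.
  induction i as [|i IH]; intros j x y Hx Hy; [simpl; apply gen_in; eauto |].
  rewrite lcs_SS in Hx. induction Hx as [x Hx| |x x' _ IHx _ IHx'|x _ IHx].
  - destruct Hx as (b & u & Hu & ->).
    assert (H2 : L (S (S i) + S j) (conjg y (commg (commg (inv u) (inv y)) b))).
    { apply lcsJ. rewrite <- invg_comm. apply lcsV.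
      replace (S (S i) + S j)%nat with (S (S i + S j)) by lia.
      apply lcs_commg_succ, IH; apply lcsV; assumption. }
    assert (H3 : L (S (S i) + S j) (conjg b (commg (commg y (inv b)) (inv u)))).
    { apply lcsJ. rewrite <- invg_comm. apply lcsV.
      replace (S (S i) + S j)%nat with (S i + S (S j))%nat by lia.
      apply IH; [apply lcsV; exact Hu |].
      rewrite <- invg_comm. apply lcsV, lcs_commg_succ. exact Hy. }
    assert (H1 : L (S (S i) + S j) (conjg (inv u) (commg (commg b u) y))).
    { pose proof (hall_witt b (inv u) y) as HW. rewrite invgK in HW.
      apply invg_of_mul_eq1 in HW. rewrite <- (invgK (conjg _ _)), HW.
      apply lcsV, lcsM; assumption. }
    replace (commg (commg b u) y) with (conjg u (conjg (inv u) (commg (commg b u) y)))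
      by (unfold conjg; group_simpl; reflexivity).
    apply lcsJ; exact H1.
  - replace (commg one y) with one by (unfold comm; group_simpl; reflexivity).
    apply lcs1g.
  - replace (commg (mul x x') y) with (mul (conjg x' (commg x y)) (commg x' y))
      by (unfold conjg, comm; group_simpl; reflexivity).
    apply lcsM; [apply lcsJ |]; assumption.
  - replace (commg (inv x) y) with (inv (conjg (inv x) (commg x y)))
      by (unfold conjg, comm; group_simpl; reflexivity).
    apply lcsV, lcsJ; assumption.
Qed.

Record normal_subgroup (N : B -> Prop) : Prop := {
  nsg1 : N one;
  nsgM : forall x y, N x -> N y -> N (mul x y);
  nsgV : forall x, N x -> N (inv x);
  nsgJ : forall g x, N x -> N (conjg g x) }.

Lemma lcs_normal n : normal_subgroup (L n).
Proof. split; auto using lcs1g, lcsM, lcsV, lcsJ. Qed.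

Definition indicator {X : Type} (R : X -> X -> Prop) (q p : X) : Z :=
  if excluded_middle_informative (R q p) then 1 else 0.

Lemma coef_nil {X : Type} (R : X -> X -> Prop) x : coef R [] x = 0.
Proof. reflexivity. Qed.

Lemma coef_cons {X : Type} (R : X -> X -> Prop) n q c x :
  coef R ((n, q) :: c) x = n * indicator R q x + coef R c x.
Proof. unfold coef, indicator; simpl. destruct excluded_middle_informative; lia. Qed.

Lemma coef_app {X : Type} (R : X -> X -> Prop) c1 c2 x :
  coef R (c1 ++ c2) x = coef R c1 x + coef R c2 x.
Proof. induction c1 as [|[n q] c1 IH]; simpl; [reflexivity | rewrite IH; lia]. Qed.

Section Quotient.
Variable N : B -> Prop.
Hypothesis hN : normal_subgroup N.

Local Notation eqv := (cong_mod mul inv N).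
Local Notation E2 := (pair_rel eqv).

Definition commute_mod (x y : B) : Prop := eqv (mul x y) (mul y x).

Lemma eqv_refl x : eqv x x.
Proof. unfold cong_mod. rewrite mulVg. apply (nsg1 _ hN). Qed.

Lemma eqv_sym x y : eqv x y -> eqv y x.
Proof.
  unfold cong_mod. intro H. apply (nsgV _ hN) in H.
  rewrite invMg, invgK in H. exact H.
Qed.

Lemma eqv_trans x y z : eqv x y -> eqv y z -> eqv x z.
Proof.
  unfold cong_mod. intros H1 H2. pose proof (nsgM _ hN _ _ H1 H2) as H.
  rewrite <- mulgA, mulKVg in H. exact H.
Qed.

Lemma eqv_mull x a b : eqv a b -> eqv (mul x a) (mul x b).
Proof.
  unfold cong_mod. intro H.
  replace (mul (inv (mul x a)) (mul x b)) with (mul (inv a) b)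
    by (group_simpl; reflexivity).
  exact H.
Qed.

Lemma eqv_conjg x a b : eqv a b -> eqv (conjg x a) (conjg x b).
Proof.
  unfold cong_mod. intro H. apply (nsgJ _ hN x) in H.
  replace (mul (inv (conjg x a)) (conjg x b)) with (conjg x (mul (inv a) b))
    by (unfold conjg; group_simpl; reflexivity).
  exact H.
Qed.

Lemma indicator_pair_eqv a b a' b' p :
  eqv a a' -> eqv b b' -> indicator E2 (a, b) p = indicator E2 (a', b') p.
Proof.
  intros Ha Hb. unfold indicator, pair_rel; simpl.
  destruct excluded_middle_informative as [[H1 H2]|H1];
  destruct excluded_middle_informative as [[H3 H4]|H3]; auto; exfalso.
  - apply H3; split; eapply eqv_trans; eauto using eqv_sym.
  - apply H1; split; eapply eqv_trans; eauto using eqv_sym.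
Qed.

(* Chains of the bar complex of B/N are handled through their coefficient functions on
   pairs of elements of B, pairs being identified modulo N. *)
Definition is_bd (f : B * B -> Z) : Prop :=
  exists w, forall p, coef E2 (d3 mul w) p = f p.

Definition homologous (c c' : list (Z * (B * B))) : Prop :=
  is_bd (fun p => coef E2 c p - coef E2 c' p).

Definition scale {Y : Type} (s : Z) (w : list (Z * Y)) : list (Z * Y) :=
  map (fun t => (s * fst t, snd t)) w.

Lemma coef_d3_app w1 w2 p :
  coef E2 (d3 mul (w1 ++ w2)) p = coef E2 (d3 mul w1) p + coef E2 (d3 mul w2) p.
Proof. unfold d3. rewrite flat_map_app, coef_app. reflexivity. Qed.

Lemma coef_d3_scale s w p : coef E2 (d3 mul (scale s w)) p = s * coef E2 (d3 mul w) p.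
Proof.
  induction w as [|[n [[g h] l]] w IH]; [simpl; ring |].
  simpl (scale s _). cbn [d3 flat_map app fst snd]. rewrite !coef_cons.
  fold (d3 mul w) (d3 mul (scale s w)). rewrite IH. ring.
Qed.

Lemma is_bd_lin f g h s t :
  is_bd f -> is_bd g -> (forall p, h p = s * f p + t * g p) -> is_bd h.
Proof.
  intros [w1 H1] [w2 H2] H. exists (scale s w1 ++ scale t w2). intro p.
  rewrite coef_d3_app, !coef_d3_scale, H1, H2, H. reflexivity.
Qed.

Lemma is_bd_ext f h : is_bd f -> (forall p, h p = f p) -> is_bd h.
Proof. intros [w H1] H. exists w. intro p. rewrite H, H1. reflexivity. Qed.

Lemma is_bd_zero : is_bd (fun _ => 0).
Proof. exists []. reflexivity. Qed.

Lemma is_bd_add f g : is_bd f -> is_bd g -> is_bd (fun p => f p + g p).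
Proof. intros Hf Hg. apply (is_bd_lin f g _ 1 1 Hf Hg). intro p. ring. Qed.

Lemma homologous_refl c : homologous c c.
Proof. apply (is_bd_ext _ _ is_bd_zero). intro p. ring. Qed.

Lemma homologous_trans c1 c2 c3 :
  homologous c1 c2 -> homologous c2 c3 -> homologous c1 c3.
Proof. intros H1 H2. apply (is_bd_lin _ _ _ 1 1 H1 H2). intro p. ring. Qed.

Lemma homologous_coef c1 c2 c1' c2' : homologous c1 c2 ->
  (forall p, coef E2 c1' p - coef E2 c2' p = coef E2 c1 p - coef E2 c2 p) ->
  homologous c1' c2'.
Proof. intros H E. apply (is_bd_ext _ _ H). exact E. Qed.

Definition wedge (u v : B) (p : B * B) : Z :=
  indicator E2 (u, v) p - indicator E2 (v, u) p.

Lemma wedge_anti u v p : wedge v u p = - wedge u v p.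
Proof. unfold wedge. ring. Qed.

Lemma wedge_eqv1r u v : eqv v one -> is_bd (wedge u v).
Proof.
  intro Hv. exists [(-1, (one, one, u)); (-1, (u, one, one))]. intro p.
  cbn [d3 flat_map app]. rewrite !coef_cons, coef_nil. unfold wedge.
  rewrite ?mul1g, ?mulg1.
  rewrite (indicator_pair_eqv u v u one), (indicator_pair_eqv v u one u)
    by (apply eqv_refl || assumption).
  ring.
Qed.

Lemma wedge1l b : is_bd (wedge one b).
Proof.
  apply (is_bd_lin _ _ _ (-1) 0 (wedge_eqv1r b one (eqv_refl one)) is_bd_zero).
  intro p. rewrite wedge_anti. ring.
Qed.

Lemma wedge_mull u v b : commute_mod u b -> commute_mod v b ->
  is_bd (fun p => wedge (mul u v) b p - wedge u b p - wedge v b p).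
Proof.
  intros Hu Hv. exists [(-1, (u, v, b)); (1, (u, b, v)); (-1, (b, u, v))]. intro p.
  cbn [d3 flat_map app]. rewrite !coef_cons, coef_nil. unfold wedge.
  rewrite (indicator_pair_eqv u (mul v b) u (mul b v)),
          (indicator_pair_eqv (mul u b) v (mul b u) v)
    by (apply eqv_refl || assumption).
  ring.
Qed.

Lemma wedge_mulr g b1 b2 : commute_mod b1 g -> commute_mod b2 g ->
  is_bd (fun p => wedge g (mul b1 b2) p - wedge g b1 p - wedge g b2 p).
Proof.
  intros H1 H2. apply (is_bd_lin _ _ _ (-1) 0 (wedge_mull b1 b2 g H1 H2) is_bd_zero).
  intro p. rewrite !(wedge_anti _ g). ring.
Qed.

Lemma wedge_invl u b : commute_mod u b -> commute_mod (inv u) b ->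
  is_bd (fun p => wedge (inv u) b p + wedge u b p).
Proof.
  intros H1 H2. apply (is_bd_lin _ _ _ (-1) 1 (wedge_mull u (inv u) b H1 H2) (wedge1l b)).
  intro p. rewrite mulgV. ring.
Qed.

Lemma wedge_conjg x u v : commute_mod u v ->
  is_bd (fun p => wedge (conjg x u) (conjg x v) p - wedge u v p).
Proof.
  intro H.
  exists [(1, (x, conjg x u, conjg x v)); (-1, (u, x, conjg x v)); (1, (u, v, x));
          (-1, (x, conjg x v, conjg x u)); (1, (v, x, conjg x u)); (-1, (v, u, x))].
  intro p. cbn [d3 flat_map app]. rewrite !coef_cons, coef_nil. unfold wedge.
  assert (Hx : commute_mod (conjg x u) (conjg x v)).
  { unfold commute_mod.
    replace (mul (conjg x u) (conjg x v)) with (conjg x (mul u v))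
      by (unfold conjg; group_simpl; reflexivity).
    replace (mul (conjg x v) (conjg x u)) with (conjg x (mul v u))
      by (unfold conjg; group_simpl; reflexivity).
    apply eqv_conjg; exact H. }
  rewrite (indicator_pair_eqv x (mul (conjg x u) (conjg x v)) x (mul (conjg x v) (conjg x u))),
          (indicator_pair_eqv (mul u v) x (mul v u) x)
    by (apply eqv_refl || assumption).
  unfold conjg. group_simpl. ring.
Qed.

Lemma commute_mod_sym x y : commute_mod x y -> commute_mod y x.
Proof. apply eqv_sym. Qed.

(* [x, y] = u y with u = (y^-1)^x; undoing the conjugation gives u ∧ b = y^-1 ∧ b [b, x^-1],
   and after expanding both products the y ∧ b and y^-1 ∧ b terms cancel. *)
Lemma wedge_commgl x y b :
  commute_mod y b -> commute_mod (inv y) b -> commute_mod (conjg x (inv y)) b ->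
  commute_mod (inv y) (conjg (inv x) b) -> commute_mod (commg b (inv x)) (inv y) ->
  is_bd (fun p => wedge (commg x y) b p - wedge (inv y) (commg b (inv x)) p).
Proof.
  intros Hy Hy' Hu Hv Hb'.
  pose proof (wedge_mull _ _ _ Hu Hy) as S1.
  pose proof (wedge_conjg x _ _ Hv) as S2.
  replace (conjg x (conjg (inv x) b)) with b in S2
    by (unfold conjg; group_simpl; reflexivity).
  pose proof (wedge_mulr _ _ _ (commute_mod_sym _ _ Hy') Hb') as S3.
  replace (mul b (commg b (inv x))) with (conjg (inv x) b) in S3
    by (unfold conjg, comm; group_simpl; reflexivity).
  pose proof (wedge_invl _ _ Hy Hy') as S4.
  replace (commg x y) with (mul (conjg x (inv y)) y)
    by (unfold conjg, comm; group_simpl; reflexivity).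
  apply (is_bd_ext _ _ (is_bd_add _ _ S1 (is_bd_add _ _ S2 (is_bd_add _ _ S3 S4)))).
  intro p. ring.
Qed.

Definition word_prod (l : list B) : B := fold_right mul one l.

Fixpoint word_chain (l : list B) : list (Z * (B * B)) :=
  match l with [] => [] | x :: l' => (1, (x, word_prod l')) :: word_chain l' end.

Definition merges_to (l l' : list B) (c : list (Z * (B * B))) : Prop :=
  homologous (word_chain l) (word_chain l' ++ c) /\ word_prod l = word_prod l'.

Lemma merges_to_nil : merges_to [] [] [].
Proof. split; [apply homologous_refl | reflexivity]. Qed.

Lemma merges_to_coef l l' c c' : merges_to l l' c ->
  (forall p, coef E2 c p = coef E2 c' p) -> merges_to l l' c'.
Proof.
  intros [H He] Hc. split; [| exact He].
  apply (homologous_coef _ _ _ _ H). intro p. rewrite !coef_app, Hc. reflexivity.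
Qed.

Lemma merges_to_cons x l l' c : merges_to l l' c -> merges_to (x :: l) (x :: l') c.
Proof.
  intros [H He]. split; [| simpl; fold (word_prod l) (word_prod l'); rewrite He; reflexivity].
  apply (homologous_coef _ _ _ _ H). intro p.
  cbn [word_chain app]. rewrite !coef_cons, He, !coef_app. ring.
Qed.

(* The d3 term (a, b, word_prod l) trades the letters a, b for the letter ab and the term (a, b). *)
Lemma merges_to_pair a b l l' c :
  merges_to l l' c -> merges_to (a :: b :: l) (mul a b :: l') (c ++ [(1, (a, b))]).
Proof.
  intros [H He]. split.
  - apply (is_bd_lin _ _ _ 1 1 H (ex_intro _ [(1, (a, b, word_prod l))] (fun _ => eq_refl))).
    intro p. cbn [word_chain app word_prod fold_right d3 flat_map].
    fold (word_prod l) (word_prod l'). rewrite <- He.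
    rewrite !coef_cons, !coef_app, !coef_cons, coef_nil. ring.
  - simpl. fold (word_prod l) (word_prod l'). rewrite He, mulgA. reflexivity.
Qed.

Fixpoint pairs_word (m : nat) (a b : B) : list B :=
  match m with O => [] | S m => a :: b :: pairs_word m a b end.

Lemma merges_to_pairs m a b l l' c : merges_to l l' c ->
  merges_to (pairs_word m a b ++ l) (repeat (mul a b) m ++ l') (c ++ [(Z.of_nat m, (a, b))]).
Proof.
  intro H. induction m as [|m IH]; simpl.
  - apply (merges_to_coef _ _ _ _ H). intro p. rewrite coef_app, coef_cons, coef_nil. ring.
  - apply (merges_to_coef _ _ _ _ (merges_to_pair _ _ _ _ _ IH)).
    intro p. rewrite !coef_app, !coef_cons, !coef_nil. lia.
Qed.

Lemma merges_to_repeat m x l l' c :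
  merges_to l l' c -> merges_to (repeat x m ++ l) (repeat x m ++ l') c.
Proof. intro H. induction m; simpl; auto using merges_to_cons. Qed.

(* A term n (a, b) of a 2-chain contributes |n| copies of the letters a, b to one
   word and |n| copies of the letter ab to the other, according to the sign of n. *)
Definition pos_word (t : Z * (B * B)) : list B := let '(n, (a, b)) := t in
  if Z_le_dec 0 n then pairs_word (Z.abs_nat n) a b else repeat (mul a b) (Z.abs_nat n).
Definition neg_word (t : Z * (B * B)) : list B := let '(n, (a, b)) := t in
  if Z_le_dec 0 n then repeat (mul a b) (Z.abs_nat n) else pairs_word (Z.abs_nat n) a b.
Definition merged_word (t : Z * (B * B)) : list B := let '(n, (a, b)) := t in
  repeat (mul a b) (Z.abs_nat n).
Definition pos_part (t : Z * (B * B)) : list (Z * (B * B)) := let '(n, (a, b)) := t in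
  if Z_le_dec 0 n then [(n, (a, b))] else [].
Definition neg_part (t : Z * (B * B)) : list (Z * (B * B)) := let '(n, (a, b)) := t in
  if Z_le_dec 0 n then [] else [(- n, (a, b))].

Lemma merges_to_pos_word z :
  merges_to (flat_map pos_word z) (flat_map merged_word z) (flat_map pos_part z).
Proof.
  induction z as [|[n [a b]] z IH]; [apply merges_to_nil |].
  cbn [flat_map]. unfold pos_word at 1, merged_word at 1, pos_part at 1.
  destruct Z_le_dec.
  - apply (merges_to_coef _ _ _ _ (merges_to_pairs _ _ _ _ _ _ IH)).
    intro p. rewrite !coef_app, !coef_cons, !coef_nil, Zabs2Nat.id_abs, Z.abs_eq by lia.
    ring.
  - apply merges_to_repeat, IH.
Qed.

Lemma merges_to_neg_word z :
  merges_to (flat_map neg_word z) (flat_map merged_word z) (flat_map neg_part z).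
Proof.
  induction z as [|[n [a b]] z IH]; [apply merges_to_nil |].
  cbn [flat_map]. unfold neg_word at 1, merged_word at 1, neg_part at 1.
  destruct Z_le_dec.
  - apply merges_to_repeat, IH.
  - apply (merges_to_coef _ _ _ _ (merges_to_pairs _ _ _ _ _ _ IH)).
    intro p. rewrite !coef_app, !coef_cons, !coef_nil, Zabs2Nat.id_abs, Z.abs_neq by lia.
    ring.
Qed.

Lemma coef_pos_neg_part z p :
  coef E2 z p = coef E2 (flat_map pos_part z) p - coef E2 (flat_map neg_part z) p.
Proof.
  induction z as [|[n [a b]] z IH]; [reflexivity |].
  cbn [flat_map]. unfold pos_part at 1, neg_part at 1. rewrite !coef_app, coef_cons, IH.
  destruct Z_le_dec; rewrite ?coef_cons, ?coef_nil; ring.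
Qed.

Definition eq_dec_classical (x y : B) : {x = y} + {x <> y} :=
  excluded_middle_informative (x = y).

Lemma count_pairs_word m a b x :
  Z.of_nat (count_occ eq_dec_classical (pairs_word m a b) x)
  = Z.of_nat m * (indicator eq a x + indicator eq b x).
Proof.
  induction m as [|m IH]; [reflexivity |].
  cbn [pairs_word count_occ]. unfold indicator, eq_dec_classical in *.
  destruct (excluded_middle_informative (a = x)), (excluded_middle_informative (b = x));
    rewrite ?Nat2Z.inj_succ, IH; lia.
Qed.

Lemma count_repeat m y x :
  Z.of_nat (count_occ eq_dec_classical (repeat y m) x) = Z.of_nat m * indicator eq y x.
Proof.
  induction m as [|m IH]; [reflexivity |].
  cbn [repeat count_occ]. unfold indicator, eq_dec_classical in *.
  destruct (excluded_middle_informative (y = x)); rewrite ?Nat2Z.inj_succ, IH; lia.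
Qed.

Lemma count_pos_neg_word z x :
  Z.of_nat (count_occ eq_dec_classical (flat_map pos_word z) x)
  - Z.of_nat (count_occ eq_dec_classical (flat_map neg_word z) x)
  = coef eq (d2 mul z) x.
Proof.
  induction z as [|[n [a b]] z IH]; [reflexivity |].
  cbn [flat_map d2]. fold (d2 mul z). unfold pos_word at 1, neg_word at 1.
  rewrite !count_occ_app, !Nat2Z.inj_add. cbn [flat_map app]. rewrite !coef_cons, <- IH.
  destruct Z_le_dec; rewrite ?count_pairs_word, ?count_repeat, Zabs2Nat.id_abs,
    ?Z.abs_eq, ?Z.abs_neq by lia; ring.
Qed.

Lemma pos_word_in z x : In x (flat_map pos_word z) ->
  exists t, In t z /\ (x = fst (snd t) \/ x = snd (snd t) \/ x = mul (fst (snd t)) (snd (snd t))).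
Proof.
  intro Hx. apply in_flat_map in Hx. destruct Hx as [[n [a b]] [Ht Hx]].
  exists (n, (a, b)). split; [exact Ht | simpl].
  unfold pos_word in Hx. destruct Z_le_dec.
  - induction (Z.abs_nat n) as [|m IHm]; simpl in Hx; [contradiction |].
    destruct Hx as [<-|[<-|Hx]]; auto.
  - apply repeat_spec in Hx. auto.
Qed.

Section Reordering.
Variable A : B -> Prop.
Hypothesis A_commute : forall x y, A x -> A y -> commute_mod x y.
Hypothesis A_wedge : forall x y, A x -> A y -> is_bd (wedge x y).
Hypothesis A_mul : forall x y, A x -> A y -> A (mul x y).

Lemma word_chain_perm l l' : Permutation l l' -> (forall x, In x l -> A x) ->
  homologous (word_chain l) (word_chain l') /\ eqv (word_prod l) (word_prod l').
Proof.
  induction 1 as [| x l l' _ IH | x y l | l l' l'' H1 IH1 _ IH2]; intro HA.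
  - split; [apply homologous_refl | apply eqv_refl].
  - destruct IH as [[w Hw] He]; [intros; apply HA; simpl; auto |].
    split; [| apply eqv_mull; exact He].
    exists w. intro p. cbn [word_chain]. rewrite !coef_cons, Hw.
    rewrite (indicator_pair_eqv x (word_prod l) x (word_prod l'))
      by (apply eqv_refl || assumption).
    ring.
  - assert (Hx : A x) by (apply HA; simpl; auto).
    assert (Hy : A y) by (apply HA; simpl; auto).
    pose proof (A_commute x y Hx Hy) as Hxy.
    split.
    + set (q := word_prod l).
      (* Once xy ≡ yx, the difference of the two word chains is d3 ((x,y,q) - (y,x,q)) + x ∧ y. *)
      apply (is_bd_lin _ _ _ (-1) (-1) (ex_intro _ [(1, (x, y, q)); (-1, (y, x, q))]
               (fun _ => eq_refl)) (A_wedge x y Hx Hy)).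
      intro p. cbn [word_chain word_prod fold_right d3 flat_map app]. fold (word_prod l) q.
      rewrite !coef_cons, coef_nil. unfold wedge.
      rewrite (indicator_pair_eqv (mul y x) q (mul x y) q)
        by (apply eqv_refl || apply eqv_sym; assumption).
      ring.
    + unfold cong_mod in *. simpl. fold (word_prod l).
      replace (mul (inv (mul y (mul x (word_prod l)))) (mul x (mul y (word_prod l))))
        with (conjg (word_prod l) (mul (inv (mul y x)) (mul x y)))
        by (unfold conjg; group_simpl; reflexivity).
      apply (nsgJ _ hN), eqv_sym, Hxy.
  - assert (HA' : forall x, In x l' -> A x)
      by (intros x Hx; apply HA, (Permutation_in _ (Permutation_sym H1) Hx)).
    destruct (IH1 HA) as [Hb1 He1], (IH2 HA') as [Hb2 He2].
    split; [apply (homologous_trans _ _ _ Hb1 Hb2) | apply (eqv_trans _ _ _ He1 He2)].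
Qed.

Lemma cycle_is_bd z : Forall (fun t => A (fst (snd t)) /\ A (snd (snd t))) z ->
  chain_eq eq (d2 mul z) [] -> is_bd (coef E2 z).
Proof.
  intros HA Hz.
  assert (Hperm : Permutation (flat_map pos_word z) (flat_map neg_word z)).
  { apply (Permutation_count_occ eq_dec_classical). intro x.
    pose proof (count_pos_neg_word z x) as E. rewrite Hz in E. simpl in E. lia. }
  assert (HAw : forall x, In x (flat_map pos_word z) -> A x).
  { intros x Hx. destruct (pos_word_in z x Hx) as [t [Ht Hx']].
    rewrite Forall_forall in HA. destruct (HA t Ht) as [Ha Hb].
    destruct Hx' as [->|[->| ->]]; auto. }
  destruct (word_chain_perm _ _ Hperm HAw) as [Hpn _].
  destruct (merges_to_pos_word z) as [Hp _], (merges_to_neg_word z) as [Hn _].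
  apply (is_bd_lin _ _ _ (-1) 1 (is_bd_lin _ _ _ 1 (-1) Hp Hn (fun _ => eq_refl)) Hpn).
  intro p. rewrite !coef_app, coef_pos_neg_part. ring.
Qed.
End Reordering.
End Quotient.

Lemma lcs_commute_mod n i j a b : (1 <= i)%nat -> (1 <= j)%nat -> (n <= i + j)%nat ->
  L i a -> L j b -> commute_mod (L n) a b.
Proof.
  intros Hi Hj Hij Ha Hb. unfold commute_mod, cong_mod.
  replace (mul (inv (mul a b)) (mul b a)) with (commg b a)
    by (unfold comm; group_simpl; reflexivity).
  destruct i as [|i]; [lia |]. destruct j as [|j]; [lia |].
  apply (lcs_antimono _ (S j + S i)); [lia |]. apply lcs_commg; assumption.
Qed.

(* Induction on i: [wedge_commgl] reduces a generator [x, y] of B_(i+2) to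
   y^-1 ∧ [b, x^-1], whose factors have depths i+1 and j+1. *)
Lemma lcs_wedge_is_bd n i : forall j a b, (1 <= j)%nat -> (n + 1 <= S i + j)%nat ->
  L (S i) a -> L j b -> is_bd (L n) (wedge (L n) a b).
Proof.
  pose proof (lcs_normal n) as hN.
  induction i as [|i IH]; intros j a b Hj Hij Ha Hb.
  - apply (wedge_eqv1r _ hN). unfold cong_mod. rewrite mulg1.
    apply lcsV, (lcs_antimono _ j); [lia | exact Hb].
  - assert (Hab : forall a', L (S (S i)) a' -> commute_mod (L n) a' b)
      by (intros; apply (lcs_commute_mod _ (S (S i)) j); auto; lia).
    rewrite lcs_SS in Ha. induction Ha as [a Ha| |a a' Ha IHa Ha' IHa'|a Ha IHa].
    + destruct Ha as (x & y & Hy & ->).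
      assert (Hb' : L (S j) (commg b (inv x))).
      { rewrite <- invg_comm. apply lcsV, lcs_commg_succ. exact Hb. }
      refine (is_bd_lin _ _ _ _ 1 1 (wedge_commgl _ hN x y b _ _ _ _ _)
                (IH (S j) _ _ ltac:(lia) ltac:(lia) (lcsV _ _ Hy) Hb') _).
      * apply (lcs_commute_mod _ (S i) j); auto; lia.
      * apply (lcs_commute_mod _ (S i) j); auto using lcsV; lia.
      * apply (lcs_commute_mod _ (S i) j); auto using lcsV, lcsJ; lia.
      * apply (lcs_commute_mod _ (S i) j); auto using lcsV, lcsJ; lia.
      * apply (lcs_commute_mod _ (S j) (S i)); auto using lcsV; lia.
      * intro p. ring.
    + apply (wedge1l _ hN).
    + rewrite <- lcs_SS in Ha, Ha'.
      apply (is_bd_ext _ _ _ (is_bd_add _ _ _ (wedge_mull _ hN a a' b (Hab a Ha) (Hab a' Ha'))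
               (is_bd_add _ _ _ IHa IHa'))).
      intro p. ring.
    + rewrite <- lcs_SS in Ha.
      apply (is_bd_lin _ _ _ _ 1 (-1)
               (wedge_invl _ hN a b (Hab a Ha) (Hab (inv a) (lcsV _ _ Ha))) IHa).
      intro p. ring.
Qed.
End Group.

Theorem lemma5p4 (B : Type) (mul : B -> B -> B) (one : B) (inv : B -> B)
  (hB : isGroup mul one inv) (k : nat) (hk : (1 <= k)%nat)
  (z : list (Z * (B * B))) :
  is_2cycle mul (@eq B) (lcs mul one inv k) z ->
  is_2boundary mul (cong_mod mul inv (lcs mul one inv (2 * k - 1))) z.
Proof.
  intros [Hentries Hcycle].
  set (N := lcs mul one inv (2 * k - 1)).
  assert (Hcommute : forall x y, lcs mul one inv k x -> lcs mul one inv k y ->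
                       commute_mod B mul inv N x y).
  { intros x y Hx Hy. apply (lcs_commute_mod _ _ _ _ hB _ k k); auto; lia. }
  assert (Hwedge : forall x y, lcs mul one inv k x -> lcs mul one inv k y ->
                     is_bd B mul inv N (wedge B mul inv N x y)).
  { intros x y Hx Hy. destruct k as [|k']; [lia |].
    apply (lcs_wedge_is_bd _ _ _ _ hB _ k' (S k')); auto; lia. }
  exact (cycle_is_bd B mul one inv hB N (lcs_normal B mul one inv hB _) _ Hcommute Hwedge
           (lcsM B mul one inv k) z Hentries Hcycle).
Qed.
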